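(* There exists $\delta>0$ such that for all sufficiently large $|S|$ the following holds: for integers $(w_i)_{i\in S}$ indexed by a finite set $S$, if $|w(2^S)|\ge 2^{(1-\delta)|S|}$, then $\|b_S\|_2\le 2^{0.661|S|}$.
   Context: For $X\subseteq S$, $w(X)=\sum_{i\in X}w_i$, and $w(2^S)=\{w(X):X\subseteq S\}$. The function $b_S:\mathbb{Z}\to\mathbb{Z}$ is defined by $b_S(x)=|\{X\subseteq S: w(X)=x\}|$, and $\|b_S\|_2=\big(\sum_{x\in\mathbb{Z}}b_S(x)^2\big)^{1/2}$. *)

From Stdlib Require Import Reals.
From mathcomp Require Import all_boot all_algebra.
Set Implicit Arguments. Unset Strict Implicit. Unset Printing Implicit Defensive.
Import GRing.Theory.

(* The finite index set S is 'I_n (so |S| = n); weights w : S -> int. *)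

Definition wsum (n : nat) (w : 'I_n -> int) (X : {set 'I_n}) : int :=
  (\sum_(i in X) w i)%R.

Definition subset_sums (n : nat) (w : 'I_n -> int) : seq int :=
  undup [seq wsum w X | X <- enum {set 'I_n}].

Definition card_sums (n : nat) (w : 'I_n -> int) : nat := size (subset_sums w).

Definition bS (n : nat) (w : 'I_n -> int) (x : int) : nat :=
  #|[set X : {set 'I_n} | wsum w X == x]|.

(* ||b_S||_2 = sqrt (sum_{x in Z} b_S(x)^2); b_S vanishes outside w(2^S). *)
Definition norm2_bS (n : nat) (w : 'I_n -> int) : R :=
  sqrt (INR (\sum_(x <- subset_sums w) (bS w x) ^ 2)%N).

From Stdlib Require Import Reals Lra.
From mathcomp Require Import all_boot all_algebra zify.
Import GRing.Theory.
Set Implicit Arguments. Unset Strict Implicit. Unset Printing Implicit Defensive.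

(** Let the collisions be the pairs (X, Y) of subsets with w(X) = w(Y); there
    are ||b_S||_2^2 of them. Fix a set R of subsets realising every subset sum
    exactly once, and weigh a triple (Z, X, Y) by a product over coordinates:
    4 where x_i = y_i, and where x_i <> y_i, 2 or 8 according as x_i agrees
    with z_i or not. Swapping X and Y turns the weight into its complement to
    16^n, so by AM-GM the collisions weigh at least 4^n ||b_S||_2^2 from any Z.
    Conversely the digit vector z + x - y + 1 in {0,..,3}^S determines
    w(Z) = w(Z) + w(X) - w(Y), hence Z in R, and the weight carried by one
    digit vector is at most a product of coordinate caps summing to 20^n.
    Hence |w(2^S)| ||b_S||_2^2 <= 5^n, and as log_2 5 < 2 * 0.661 + 1 the
    theorem holds with delta = 1/20500 and every n. *)

Lemma sum_subsets_prod (T : finType) (h : T -> bool -> nat) :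
  \sum_(X : {set T}) \prod_(i : T) h i (i \in X) = \prod_(i : T) (h i true + h i false).
Proof.
under [RHS]eq_bigr do rewrite -big_bool.
rewrite (bigA_distr_bigA h) (reindex (fun f : {ffun T -> bool} => [set i | f i])) /=.
  by apply: eq_bigr => f _; apply: eq_bigr => i _; rewrite inE.
exists (fun X : {set T} => [ffun i => i \in X]) => [f _ | X _].
  by apply/ffunP => i; rewrite ffunE inE.
by apply/setP => i; rewrite inE ffunE.
Qed.

Lemma prod_nat_bool (T : finType) (b : pred T) : \prod_(i : T) (b i : nat) = [forall i, b i].
Proof.
have [/forallP bT | /forallPn [i /negbTE bi]] := boolP [forall i, b i].
  by rewrite big1 // => i _; rewrite bT.
by rewrite (bigD1 i) //= bi.
Qed.

Lemma nat_AGM2_sqr (a b k : nat) : a * b = k ^ 2 -> k.*2 <= a + b.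
Proof. by move=> abk; rewrite -leq_sqr -mul2n expnMn -abk (nat_AGM2 a b). Qed.

Lemma sum_le_of_unique_support (I : finType) (A : {pred I}) (F : I -> nat) (c : nat) :
    (forall i, i \in A -> F i <= c) ->
    {in A &, forall i j, 0 < F i -> 0 < F j -> i = j} ->
  \sum_(i in A) F i <= c.
Proof.
move=> leFc F_uniq; case: (pickP [pred i in A | 0 < F i]) => [i0 /andP [Ai0 Fi0_gt0] | F0].
  rewrite (bigD1 i0) //= big1 ?addn0 ?leFc // => j /andP [Aj neq_ji0].
  by apply/eqP; rewrite -leqn0 leqNgt; apply: contra neq_ji0 => Fj_gt0; rewrite (F_uniq j i0).
rewrite big1 // => i Ai; apply/eqP; rewrite -leqn0 leqNgt.
by move: (F0 i); rewrite /= Ai => /negbT.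
Qed.

Section Weights.
Variable T : finType.

Definition pair_weight (z x y : bool) : nat :=
  if x == y then 4 else if x == z then 2 else 8.

Definition weight (Z X Y : {set T}) : nat :=
  \prod_(i : T) pair_weight (i \in Z) (i \in X) (i \in Y).

Lemma weight_swap Z X Y : weight Z X Y * weight Z Y X = 16 ^ #|T|.
Proof.
rewrite -big_split /= -prod_nat_const; apply: eq_bigr => i _.
by case: (i \in Z); case: (i \in X); case: (i \in Y).
Qed.

Lemma sum_weight_sym_ge (P : {set {set T} * {set T}}) Z :
    (forall X Y, ((Y, X) \in P) = ((X, Y) \in P)) ->
  4 ^ #|T| * #|P| <= \sum_(p in P) weight Z p.1 p.2.
Proof.
move=> P_sym.
have swap_sum : \sum_(p in P) weight Z p.2 p.1 = \sum_(p in P) weight Z p.1 p.2.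
  rewrite (reindex_inj (h := fun p : {set T} * {set T} => (p.2, p.1))) /=.
    by apply: eq_bigl => -[X Y]; rewrite P_sym.
  by move=> [X Y] [X' Y'] [-> ->].
rewrite -leq_double -[X in _ <= X]addnn -[X in _ <= _ + X]swap_sum -big_split /=.
rewrite mulnC doubleMr -sum_nat_const; apply: leq_sum => -[X Y] _.
by apply: nat_AGM2_sqr; rewrite weight_swap -expnM mulnC expnM.
Qed.

(* [z + x + 1 - y] lies in 0..3: neither the truncated subtraction nor [inord] loses information. *)
Definition digit (z x y : bool) : 'I_4 := inord (z + x + 1 - y).

Definition digits (Z X Y : {set T}) : {ffun T -> 'I_4} :=
  [ffun i => digit (i \in Z) (i \in X) (i \in Y)].

Definition digit_cap (v : 'I_4) : nat := if (v == 1 :> nat) || (v == 2 :> nat) then 8 else 2.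

Lemma pair_weight_digit_le (z : bool) (v : 'I_4) :
  let F x y := (digit z x y == v) * pair_weight z x y in
  (F true true + F true false) + (F false true + F false false) <= digit_cap v.
Proof.
by case: v => -[|[|[|[|]]]] // ?; case: z; rewrite /= /digit -!val_eqE /= ?inordK.
Qed.

Lemma sum_weight_digits_le Z V :
  \sum_(X : {set T}) \sum_(Y : {set T}) (digits Z X Y == V) * weight Z X Y
    <= \prod_(i : T) digit_cap (V i).
Proof.
pose F i x y := (digit (i \in Z) x y == V i) * pair_weight (i \in Z) x y.
have split_digits X Y : (digits Z X Y == V) * weight Z X Y = \prod_(i : T) F i (i \in X) (i \in Y).
  have -> : (digits Z X Y == V) = [forall i, digits Z X Y i == V i].
    by apply/eqP/forallP => [-> // | eqV]; apply/ffunP => i; apply/eqP.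
  by rewrite -prod_nat_bool -big_split; apply: eq_bigr => i _; rewrite ffunE.
under [X in X <= _]eq_bigr => X _ do under eq_bigr => Y _ do rewrite split_digits.
under [X in X <= _]eq_bigr => X _ do rewrite (sum_subsets_prod (fun i => F i (i \in X))).
rewrite (sum_subsets_prod (fun i x => F i x true + F i x false)).
by apply: leq_prod => i _; apply: pair_weight_digit_le.
Qed.

Lemma sum_digit_caps : \sum_(V : {ffun T -> 'I_4}) \prod_(i : T) digit_cap (V i) = 20 ^ #|T|.
Proof.
rewrite -(bigA_distr_bigA (fun (i : T) (v : 'I_4) => digit_cap v)) -prod_nat_const /=.
by apply: eq_bigr => i _; rewrite !big_ord_recr big_ord0.
Qed.

End Weights.

Section SubsetSums.
Variables (n : nat) (w : 'I_n -> int).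

Definition collisions : {set {set 'I_n} * {set 'I_n}} := [set p | wsum w p.1 == wsum w p.2].

Lemma bS_sum_eq x : bS w x = \sum_(Y : {set 'I_n}) (wsum w Y == x).
Proof. by rewrite /bS -sum1_card big_mkcond /=; apply: eq_bigr => Y _; rewrite inE; case: eqP. Qed.

Lemma mem_subset_sums X : wsum w X \in subset_sums w.
Proof. by rewrite mem_undup map_f ?mem_enum. Qed.

Lemma card_collisions : \sum_(x <- subset_sums w) bS w x ^ 2 = #|collisions|.
Proof.
have -> : #|collisions| = \sum_(X : {set 'I_n}) bS w (wsum w X).
  have -> : #|collisions| = \sum_(X : {set 'I_n}) \sum_(Y : {set 'I_n}) ((X, Y) \in collisions).
    by rewrite pair_big /= -sum1_card big_mkcond; apply: eq_bigr => -[X Y] _; case: (_ \in _).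
  by apply: eq_bigr => X _; rewrite bS_sum_eq; apply: eq_bigr => Y _; rewrite inE eq_sym.
under eq_bigr do rewrite expnS expn1 [X in X * _]bS_sum_eq big_distrl /=.
rewrite exchange_big /=; apply: eq_bigr => X _.
rewrite (bigD1_seq (wsum w X)) ?mem_subset_sums ?undup_uniq //= eqxx mul1n big1 ?addn0 //.
by move=> x /negbTE; rewrite eq_sym => ->.
Qed.

Definition sum_rep (x : int) : {set 'I_n} := odflt set0 [pick X | wsum w X == x].

Lemma wsum_sum_rep X : wsum w (sum_rep (wsum w X)) = wsum w X.
Proof. by rewrite /sum_rep; case: pickP => [Y /eqP // | /(_ X)]; rewrite eqxx. Qed.

Definition sum_reps : {set {set 'I_n}} := [set Z | Z == sum_rep (wsum w Z)].

Lemma sum_reps_inj : {in sum_reps &, injective (wsum w)}.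
Proof. by move=> Z Z'; rewrite !inE => /eqP -> /eqP ->; rewrite !wsum_sum_rep => ->. Qed.

Lemma card_sum_reps : #|sum_reps| = card_sums w.
Proof.
rewrite cardE -(size_map (wsum w)); apply: perm_size; apply: uniq_perm.
- by rewrite map_inj_in_uniq ?enum_uniq // => Z Z'; rewrite !mem_enum; apply: sum_reps_inj.
- exact: undup_uniq.
move=> x; rewrite mem_undup; apply/mapP/mapP => -[X _ ->].
  by exists X; rewrite ?mem_enum.
by exists (sum_rep (wsum w X)); rewrite ?wsum_sum_rep // mem_enum inE wsum_sum_rep.
Qed.

Lemma wsum_digits Z X Y :
  (\sum_i ((digits Z X Y i : nat)%:Z - 1) * w i)%R = (wsum w Z + wsum w X - wsum w Y)%R.
Proof.
rewrite /wsum !(big_mkcond (fun i => i \in _)) -big_split -sumrB /=.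
apply: eq_bigr => i _; rewrite ffunE /digit.
by case: (i \in Z); case: (i \in X); case: (i \in Y); rewrite inordK //=; lia.
Qed.

Lemma sum_weight_collisions_le (R : {set {set 'I_n}}) :
    {in R &, injective (wsum w)} ->
  \sum_(Z in R) \sum_(p in collisions) weight Z p.1 p.2 <= 20 ^ n.
Proof.
move=> R_inj.
have split_digits Z (p : {set 'I_n} * {set 'I_n}) : weight Z p.1 p.2 =
    \sum_(V : {ffun 'I_n -> 'I_4}) (digits Z p.1 p.2 == V) * weight Z p.1 p.2.
  rewrite (bigD1 (digits Z p.1 p.2)) //= eqxx mul1n big1 ?addn0 // => V.
  by rewrite eq_sym => /negbTE ->.
under eq_bigr do under eq_bigr do rewrite split_digits.
under eq_bigr do rewrite exchange_big.
rewrite exchange_big -[n in 20 ^ n]card_ord -sum_digit_caps; apply: leq_sum => V _.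
pose F Z := \sum_(p in collisions) (digits Z p.1 p.2 == V) * weight Z p.1 p.2.
have wsum_of_digits Z : 0 < F Z -> wsum w Z = (\sum_i ((V i : nat)%:Z - 1) * w i)%R.
  rewrite lt0n sum_nat_eq0 => /forall_inPn [[X Y]].
  rewrite inE muln_eq0 negb_or eqb0 negbK => /eqP XY_coll /andP [/eqP <- _].
  by rewrite wsum_digits XY_coll addrK.
apply: sum_le_of_unique_support => [Z _ | Z Z' RZ RZ' /wsum_of_digits Zw /wsum_of_digits Z'w].
  apply: leq_trans (sum_weight_digits_le Z V).
  rewrite pair_big /= big_mkcond /=.
  by apply: leq_sum => p _; case: (p \in collisions).
by apply: R_inj; rewrite ?Zw.
Qed.

Lemma card_sums_mul_collisions_le : card_sums w * #|collisions| <= 5 ^ n.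
Proof.
rewrite -card_sum_reps -(@leq_pmul2r (4 ^ n)) ?expn_gt0 // -expnMn -mulnA -sum_nat_const.
apply: leq_trans (sum_weight_collisions_le sum_reps_inj).
apply: leq_sum => Z _; rewrite mulnC -{1}(card_ord n).
by apply: sum_weight_sym_ge => X Y; rewrite !inE eq_sym.
Qed.

End SubsetSums.

Local Open Scope R_scope.

Lemma INR_expn (m k : nat) : INR (m ^ k) = INR m ^ k.
Proof. by elim: k => [|k IHk]; rewrite ?expn0 // expnS mult_INR IHk. Qed.

Lemma sqrt_le_of_mul_le (K M B T : R) :
  0 < K -> K <= M -> 0 <= B -> 0 <= T -> M * B <= T ^ 2 * K -> sqrt B <= T.
Proof.
move=> K_gt0 le_KM B_ge0 T_ge0 le_MB.
have le_BT : B <= T ^ 2 by apply: (Rmult_le_reg_r K) => //; nra.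
by rewrite -(sqrt_pow2 T) //; apply: sqrt_le_1_alt.
Qed.

(* 476/205 = 2 * 0.661 + 1 - 1/20500, and the bound amounts to 5^205 <= 2^476. *)
Lemma five_le_Rpower2 : 5 <= Rpower 2 (476 / 205).
Proof.
have INR205 : INR 205 = 205 by rewrite INR_IZR_INZ.
have INR476 : INR 476 = 476 by rewrite INR_IZR_INZ.
have root5 : Rpower (Rpower 5 (INR 205)) (/ 205) = 5.
  by rewrite Rpower_mult INR205 Rinv_r ?Rpower_1; lra.
have root2 : Rpower (Rpower 2 (INR 476)) (/ 205) = Rpower 2 (476 / 205).
  by rewrite Rpower_mult INR476.
rewrite -root5 -root2; apply: Rle_Rpower_l; first by left; apply: Rinv_0_lt_compat; lra.
by rewrite !Rpower_pow; lra.
Qed.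

Lemma pow5_le_Rpower2 n :
  INR 5 ^ n <= Rpower 2 (0.661 * INR n) ^ 2 * Rpower 2 ((1 - / 20500) * INR n).
Proof.
have -> : INR 5 = 5 by rewrite INR_IZR_INZ.
rewrite /= Rmult_1_r -!Rpower_plus.
have -> : 0.661 * INR n + 0.661 * INR n + (1 - / 20500) * INR n = 476 / 205 * INR n by lra.
rewrite -Rpower_mult -Rpower_pow; last lra.
apply: Rle_Rpower_l; first exact: pos_INR.
by split; [lra | exact: five_le_Rpower2].
Qed.

Theorem proposition5 :
  exists delta : R, 0 < delta /\
  exists N : nat, forall n : nat, (N <= n)%nat ->
  forall w : 'I_n -> int,
    Rpower 2 ((1 - delta) * INR n) <= INR (card_sums w) ->
    norm2_bS w <= Rpower 2 (0.661 * INR n).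
Proof.
exists (/ 20500); split; first lra.
exists 0%nat => n _ w card_ge.
have := le_INR _ _ (leP (card_sums_mul_collisions_le w)).
rewrite mult_INR INR_expn => mul_le.
rewrite /norm2_bS card_collisions.
apply: (sqrt_le_of_mul_le _ card_ge (pos_INR _)); first exact: exp_pos.
  exact: Rlt_le (exp_pos _).
exact: Rle_trans mul_le (pow5_le_Rpower2 n).
Qed.
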